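(* Let $(X,d)$ be a compact metric space and $(X_k)_k$ a sequence of subsets of $X$, with $d_k$ the restriction of $d$ to $X_k\times X_k$. Assume there is $C>0$ such that $(X_k,d_k)$ is $C$-quasiconvex for every $k$, and $\lim_{k\to\infty}d_H(X_k,X)=0$. Then $(X,d)$ is $C$-quasiconvex.
   Context: A metric space $(Y,\delta)$ is $C$-quasiconvex if $\delta_I\le C\delta$, where $\delta_I(x,y)$ is the infimum of the lengths of continuous curves in $Y$ from $x$ to $y$ (length $=\sup\sum_i\delta(\gamma(t_i),\gamma(t_{i+1}))$ over partitions). The Hausdorff–Pompeiu distance is $d_H(A,B)=\max\{\sup_{x\in A}d(x,B),\sup_{y\in B}d(y,A)\}$ with $d(x,C)=\inf_{z\in C}d(x,z)$. *)

From Stdlib Require Import Reals List.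
Open Scope R_scope.

Definition is_metric {X : Type} (d : X -> X -> R) : Prop :=
  (forall x y, 0 <= d x y) /\
  (forall x y, d x y = 0 <-> x = y) /\
  (forall x y, d x y = d y x) /\
  (forall x y z, d x z <= d x y + d y z).

Definition d_open {X : Type} (d : X -> X -> R) (U : X -> Prop) : Prop :=
  forall x, U x -> exists r, 0 < r /\ forall y, d x y < r -> U y.

Definition d_compact {X : Type} (d : X -> X -> R) : Prop :=
  forall (I : Type) (U : I -> X -> Prop),
    (forall i, d_open d (U i)) ->
    (forall x, exists i, U i x) ->
    exists l : list I, forall x, exists i, In i l /\ U i x.

Definition curve_in {X : Type} (d : X -> X -> R) (Y : X -> Prop) (g : R -> X) : Prop :=
  (forall t, 0 <= t <= 1 -> Y (g t)) /\
  (forall t, 0 <= t <= 1 -> forall eps, 0 < eps ->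
     exists del, 0 < del /\
       forall s, 0 <= s <= 1 -> Rabs (s - t) < del -> d (g s) (g t) < eps).

Fixpoint psum {X : Type} (d : X -> X -> R) (g : R -> X) (t : nat -> R) (n : nat) : R :=
  match n with
  | O => 0
  | S m => psum d g t m + d (g (t m)) (g (t (S m)))
  end.

Definition is_partition (t : nat -> R) (n : nat) : Prop :=
  t O = 0 /\ t n = 1 /\ (forall i, (i < n)%nat -> t i <= t (S i)).

Definition length_le {X : Type} (d : X -> X -> R) (g : R -> X) (L : R) : Prop :=
  forall t n, is_partition t n -> psum d g t n <= L.

(* (Y, d|Y) is C-quasiconvex: for x, y in Y, the infimum of lengths of curves
   in Y from x to y is <= C d(x,y); i.e. for every eps > 0 there is such a
   curve of length <= C d(x,y) + eps. *)
Definition quasiconvex {X : Type} (d : X -> X -> R) (Y : X -> Prop) (C : R) : Prop :=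
  forall x y, Y x -> Y y -> forall eps, 0 < eps ->
    exists g, curve_in d Y g /\ g 0 = x /\ g 1 = y /\ length_le d g (C * d x y + eps).

Definition hausdorff_le {X : Type} (d : X -> X -> R) (A B : X -> Prop) (r : R) : Prop :=
  (forall x, A x -> forall eta, 0 < eta -> exists y, B y /\ d x y < r + eta) /\
  (forall y, B y -> forall eta, 0 < eta -> exists x, A x /\ d y x < r + eta).

Definition hausdorff_cvg {X : Type} (d : X -> X -> R) (A : nat -> X -> Prop) (B : X -> Prop) : Prop :=
  forall eps, 0 < eps -> exists N, forall k, (N <= k)%nat -> hausdorff_le d (A k) B eps.

From Stdlib Require Import Reals Lra Lia List Classical ClassicalEpsilon.
Open Scope R_scope.

(* Two points x, y of the limit space are joined by arbitrarily fine chains of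
   length arbitrarily close to C d(x,y): move x and y to nearby points of some
   X_k and cut a short curve in X_k into small steps.  By compactness such a
   chain bound L has an exact midpoint (a cluster point of approximate ones), so
   repeated bisection places points at all dyadic parameters with
   d(p(s), p(t)) <= L |s - t|.  Taking cluster points extends this map to an
   L-Lipschitz curve from x to y, and its length is at most L = C d(x,y). *)

Lemma exists_crossing_index (P : nat -> R) (T : R) (m : nat) :
  P O <= T -> exists i, (i <= m)%nat /\ P i <= T /\ (i = m \/ T < P (S i)).
Proof.
  intros h0. induction m as [|m IH].
  - exists O. auto.
  - destruct IH as (i & him & hi & [-> | hlt]).
    + destruct (Rle_or_lt (P (S m)) T) as [hle | hgt].
      * exists (S m). auto.
      * exists m. auto.
    + exists i. auto.
Qed.

Lemma div_pow2_eventually_le (L e : R) :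
  0 < e -> exists N, forall m, (N <= m)%nat -> L / 2 ^ m <= e.
Proof.
  intros he. destruct (INR_unbounded (L / e)) as [N hN]. exists N. intros m hm.
  assert (hm2 : INR m < 2 ^ m).
  { replace 2 with (INR 2) by (simpl; lra). rewrite <- pow_INR.
    apply lt_INR, Nat.pow_gt_lin_r. lia. }
  apply le_INR in hm.
  assert (hLe : L < e * 2 ^ m).
  { replace L with (L / e * e) by (field; lra). rewrite Rmult_comm.
    apply Rmult_lt_compat_l; lra. }
  assert (0 < 2 ^ m) by (apply pow_lt; lra).
  apply Rmult_le_reg_r with (2 ^ m); [lra|].
  replace (L / 2 ^ m * 2 ^ m) with L by (field; lra). lra.
Qed.

Lemma dyadic_approx (t : R) (n : nat) :
  0 <= t <= 1 -> exists k, (k <= 2 ^ n)%nat /\ Rabs (t - INR k / 2 ^ n) <= 1 / 2 ^ n.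
Proof.
  intros ht. assert (hp : 0 < 2 ^ n) by (apply pow_lt; lra).
  destruct (exists_crossing_index (fun i => INR i / 2 ^ n) t (2 ^ n)) as (k & hk & hkt & hcross).
  { simpl. unfold Rdiv. rewrite Rmult_0_l. lra. }
  exists k. split; [exact hk|]. cbv beta in hkt, hcross.
  destruct hcross as [-> | hlt].
  - rewrite pow_INR in *. replace (INR 2) with 2 in * by (simpl; lra).
    replace (2 ^ n / 2 ^ n) with 1 in * by (field; lra).
    replace (t - 1) with 0 by lra. rewrite Rabs_R0.
    apply Rlt_le, Rdiv_lt_0_compat; lra.
  - rewrite S_INR in hlt. rewrite Rabs_right by lra.
    replace ((INR k + 1) / 2 ^ n) with (INR k / 2 ^ n + 1 / 2 ^ n) in hlt by (field; lra). lra.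
Qed.

Lemma INR_mul_pow2_div (a n m : nat) : INR (a * 2 ^ m) / 2 ^ (n + m) = INR a / 2 ^ n.
Proof.
  assert (0 < 2 ^ n) by (apply pow_lt; lra). assert (0 < 2 ^ m) by (apply pow_lt; lra).
  rewrite mult_INR, pow_INR, pow_add. replace (INR 2) with 2 by (simpl; lra).
  field. lra.
Qed.

Lemma nondecreasing_upto (t : nat -> R) (n : nat) :
  (forall i, (i < n)%nat -> t i <= t (S i)) -> forall i j, (i <= j <= n)%nat -> t i <= t j.
Proof.
  intros ht i j. induction j as [|j IH]; intros hij.
  - replace i with O by lia. lra.
  - destruct (Nat.eq_dec i (S j)) as [-> | hne]; [lra|].
    specialize (ht j ltac:(lia)). specialize (IH ltac:(lia)). lra.
Qed.

Section MetricSpace.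

Variables (X : Type) (d : X -> X -> R).
Hypothesis d_metric : is_metric d.

Lemma dist_ge0 x y : 0 <= d x y.
Proof. exact (proj1 d_metric x y). Qed.

Lemma dist_self x : d x x = 0.
Proof. exact (proj2 (proj1 (proj2 d_metric) x x) eq_refl). Qed.

Lemma dist_le0_eq x y : d x y <= 0 -> x = y.
Proof.
  intros h. apply (proj1 (proj2 d_metric)). pose proof (dist_ge0 x y). lra.
Qed.

Lemma dist_sym x y : d x y = d y x.
Proof. exact (proj1 (proj2 (proj2 d_metric)) x y). Qed.

Lemma dist_triangle x y z : d x z <= d x y + d y z.
Proof. exact (proj2 (proj2 (proj2 d_metric)) x y z). Qed.

Fixpoint csum (c : nat -> X) (m : nat) : R :=
  match m with O => 0 | S k => csum c k + d (c k) (c (S k)) end.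

Definition dchain (del : R) (x y : X) (L : R) : Prop :=
  exists c m, c O = x /\ c m = y /\
    (forall i, (i < m)%nat -> d (c i) (c (S i)) < del) /\ csum c m <= L.

Definition chain_le (x y : X) (L : R) : Prop :=
  forall del eps, 0 < del -> 0 < eps -> dchain del x y (L + eps).

Lemma csum_add c i j : csum c (i + j) = csum c i + csum (fun k => c (i + k)%nat) j.
Proof.
  induction j as [|j IH]; simpl.
  - rewrite Nat.add_0_r. lra.
  - rewrite Nat.add_succ_r. simpl. rewrite IH. lra.
Qed.

Lemma csum_ext c c' m : (forall i, (i <= m)%nat -> c i = c' i) -> csum c m = csum c' m.
Proof.
  induction m as [|m IH]; intros h; simpl; [reflexivity|].
  rewrite IH, (h m), (h (S m)); [reflexivity | lia | lia | intros i hi; apply h; lia].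
Qed.

Lemma dist_le_csum c m : d (c O) (c m) <= csum c m.
Proof.
  induction m as [|m IH]; simpl.
  - rewrite dist_self. lra.
  - pose proof (dist_triangle (c O) (c m) (c (S m))). lra.
Qed.

Lemma dchain_dist_le del x y L : dchain del x y L -> d x y <= L.
Proof. intros (c & m & <- & <- & _ & hlen). pose proof (dist_le_csum c m). lra. Qed.

Lemma dchain_weaken del del' x y L L' :
  del <= del' -> L <= L' -> dchain del x y L -> dchain del' x y L'.
Proof.
  intros hdel hL (c & m & hx & hy & hstep & hlen). exists c, m.
  repeat split; auto; [|lra]. intros i hi. specialize (hstep i hi). lra.
Qed.

Lemma dchain_refl del x : dchain del x x 0.
Proof. exists (fun _ => x), O. simpl. repeat split; [lia | lra]. Qed.

Lemma dchain_step del x y : d x y < del -> dchain del x y (d x y).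
Proof.
  intros h. exists (fun i => match i with O => x | _ => y end), 1%nat. simpl.
  repeat split; [|lra]. intros i hi. replace i with O by lia. exact h.
Qed.

Lemma dchain_cat del x y z L1 L2 :
  dchain del x y L1 -> dchain del y z L2 -> dchain del x z (L1 + L2).
Proof.
  intros (c1 & m1 & hx & hy & hstep1 & hlen1) (c2 & m2 & hy' & hz & hstep2 & hlen2).
  set (c := fun i => if Nat.ltb i m1 then c1 i else c2 (i - m1)%nat).
  assert (hleft : forall i, (i <= m1)%nat -> c i = c1 i).
  { intros i hi. unfold c. destruct (Nat.ltb_spec i m1); [reflexivity|].
    replace i with m1 by lia. rewrite Nat.sub_diag, hy', hy. reflexivity. }
  assert (hright : forall k, c (m1 + k)%nat = c2 k).
  { intros k. unfold c. destruct (Nat.ltb_spec (m1 + k) m1); [lia|]. f_equal. lia. }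
  exists c, (m1 + m2)%nat. repeat split.
  - rewrite hleft by lia. exact hx.
  - rewrite hright. exact hz.
  - intros i hi. destruct (Nat.lt_ge_cases i m1).
    + rewrite !hleft by lia. apply hstep1. lia.
    + replace i with (m1 + (i - m1))%nat by lia.
      rewrite <- Nat.add_succ_r, !hright. apply hstep2. lia.
  - rewrite csum_add, (csum_ext c c1 m1 hleft), (csum_ext _ c2 m2) by (intros; apply hright).
    lra.
Qed.

Lemma dchain_halve del x y L : 0 < del -> dchain del x y L ->
  exists z, dchain del x z (L / 2) /\ dchain del z y (L / 2 + del).
Proof.
  intros hdel (c & m & <- & <- & hstep & hlen).
  (* cut at the last index where the partial sum is still at most half *)
  pose proof (dist_le_csum c m) as hsum. pose proof (dist_ge0 (c O) (c m)).
  destruct (exists_crossing_index (csum c) (csum c m / 2) m) as (i & him & hi & hcross).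
  { simpl. lra. }
  exists (c i). split.
  - exists c, i. repeat split; auto; [|lra]. intros j hj. apply hstep. lia.
  - exists (fun k => c (i + k)%nat), (m - i)%nat. repeat split.
    + rewrite Nat.add_0_r. reflexivity.
    + f_equal. lia.
    + intros j hj. rewrite Nat.add_succ_r. apply hstep. lia.
    + pose proof (csum_add c i (m - i)) as hsplit.
      replace (i + (m - i))%nat with m in hsplit by lia.
      destruct (Nat.eq_dec i m) as [-> | hne].
      * rewrite Nat.sub_diag in *. simpl in *. lra.
      * destruct hcross as [| hlt]; [lia|]. simpl in hlt.
        specialize (hstep i ltac:(lia)). lra.
Qed.

Lemma chain_le_dist_le x y L : chain_le x y L -> d x y <= L.
Proof.
  intros h. apply Rle_plus_epsilon. intros eps heps.
  exact (dchain_dist_le _ _ _ _ (h 1 eps Rlt_0_1 heps)).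
Qed.

Lemma chain_le_weaken x y L L' : L <= L' -> chain_le x y L -> chain_le x y L'.
Proof.
  intros hL h del eps hdel heps. apply dchain_weaken with del (L + eps); [lra | lra |].
  apply h; assumption.
Qed.

Lemma chain_le_refl x : chain_le x x 0.
Proof. intros del eps _ heps. apply dchain_weaken with del 0; [lra | lra | apply dchain_refl]. Qed.

Lemma chain_le_trans x y z L1 L2 : chain_le x y L1 -> chain_le y z L2 -> chain_le x z (L1 + L2).
Proof.
  intros h1 h2 del eps hdel heps.
  apply dchain_weaken with del ((L1 + eps / 2) + (L2 + eps / 2)); [lra | lra |].
  apply dchain_cat with y; [apply h1 | apply h2]; lra.
Qed.

Lemma chain_le_approx x y L :
  (forall del eps, 0 < del -> 0 < eps ->
     exists x' y', d x x' < del /\ d y' y < del /\ dchain del x' y' (L + eps)) ->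
  chain_le x y L.
Proof.
  intros h del eps hdel heps.
  pose proof (Rmin_l del (eps / 3)). pose proof (Rmin_r del (eps / 3)).
  set (r := Rmin del (eps / 3)) in *.
  assert (hr : 0 < r) by (apply Rmin_pos; lra).
  destruct (h r (eps / 3) hr ltac:(lra)) as (x' & y' & hx & hy & hc).
  apply dchain_weaken with r (d x x' + (L + eps / 3) + d y' y); [lra | lra |].
  apply dchain_cat with y'; [apply dchain_cat with x' |]; auto using dchain_step.
Qed.

Definition fine_partition_upto (g : R -> X) (del s : R) : Prop :=
  exists t n, t O = 0 /\ t n = s /\
    forall i, (i < n)%nat -> t i <= t (S i) /\ d (g (t i)) (g (t (S i))) < del.

Lemma fine_partition_extend g del s s' :
  fine_partition_upto g del s -> s <= s' -> d (g s) (g s') < del -> fine_partition_upto g del s'.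
Proof.
  intros (t & n & h0 & hn & hstep) hss' hd.
  exists (fun i => if Nat.leb i n then t i else s'), (S n). cbv beta. split; [|split].
  - destruct (Nat.leb_spec 0 n); [exact h0 | lia].
  - destruct (Nat.leb_spec (S n) n); [lia | reflexivity].
  - intros i hi. destruct (Nat.leb_spec i n); [|lia].
    destruct (Nat.leb_spec (S i) n); [apply hstep; lia|].
    replace i with n by lia. rewrite hn. split; [lra | exact hd].
Qed.

Lemma curve_fine_partition Y g del : curve_in d Y g -> 0 < del ->
  exists t n, is_partition t n /\ forall i, (i < n)%nat -> d (g (t i)) (g (t (S i))) < del.
Proof.
  intros [_ hcont] hdel.
  (* the supremum of the parameters reachable by fine steps is reachable, and is 1,
     by continuity of g at the supremum *)
  set (E := fun s => 0 <= s <= 1 /\ fine_partition_upto g del s).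
  assert (hE0 : E 0).
  { split; [lra|]. exists (fun _ => 0), O. repeat split; lia. }
  destruct (completeness E) as [sup [hub hlub]].
  { exists 1. intros s [hs _]. lra. }
  { exists 0. exact hE0. }
  assert (hsup : 0 <= sup <= 1).
  { split; [apply hub, hE0 | apply hlub; intros s [hs _]; lra]. }
  destruct (hcont sup hsup (del / 2) ltac:(lra)) as (del0 & hdel0 & hnear).
  assert (hs0 : exists s0, E s0 /\ sup - del0 < s0).
  { apply NNPP. intros hno. assert (sup <= sup - del0); [|lra].
    apply hlub. intros s hs. apply Rnot_lt_le. intros hlt. apply hno. exists s. split; [auto | lra]. }
  destruct hs0 as (s0 & [hs0 hfine0] & hs0gt).
  assert (hs0le : s0 <= sup) by (apply hub; split; auto).
  pose proof (Rmin_l 1 (sup + del0 / 2)). pose proof (Rmin_r 1 (sup + del0 / 2)).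
  set (s' := Rmin 1 (sup + del0 / 2)) in *.
  assert (hs'ge : sup <= s') by (unfold s'; apply Rmin_case; lra).
  assert (hEs' : E s').
  { split; [lra|]. apply (fine_partition_extend g del s0); [exact hfine0 | lra |].
    pose proof (hnear s0 ltac:(lra) ltac:(apply Rabs_def1; lra)).
    pose proof (hnear s' ltac:(lra) ltac:(apply Rabs_def1; lra)).
    pose proof (dist_triangle (g s0) (g sup) (g s')). rewrite (dist_sym (g s') (g sup)) in *. lra. }
  assert (hs'1 : s' = 1).
  { pose proof (hub s' hEs') as hle. revert hle. unfold s'. apply Rmin_case; intros; lra. }
  destruct hEs' as [_ (t & n & h0 & hn & hstep)].
  exists t, n. repeat split; try apply hstep; congruence.
Qed.

Lemma csum_psum g t n : csum (fun i => g (t i)) n = psum d g t n.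
Proof. induction n as [|n IH]; simpl; [reflexivity | rewrite IH; reflexivity]. Qed.

Lemma curve_dchain Y g L del : curve_in d Y g -> length_le d g L -> 0 < del ->
  dchain del (g 0) (g 1) L.
Proof.
  intros hg hlen hdel.
  destruct (curve_fine_partition Y g del hg hdel) as (t & n & hpart & hstep).
  pose proof hpart as (h0 & hn & _).
  exists (fun i => g (t i)), n. rewrite h0, hn, csum_psum.
  repeat split; [exact hstep | apply hlen; exact hpart].
Qed.

Lemma quasiconvex_chain_le Y C x y : quasiconvex d Y C -> Y x -> Y y -> chain_le x y (C * d x y).
Proof.
  intros hq hx hy del eps hdel heps.
  destruct (hq x y hx hy eps heps) as (g & hg & <- & <- & hlen).
  exact (curve_dchain Y g _ del hg hlen hdel).
Qed.

Lemma hausdorff_chain_le (Xk : nat -> X -> Prop) C x y : 0 <= C ->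
  (forall k, quasiconvex d (Xk k) C) -> hausdorff_cvg d Xk (fun _ => True) ->
  chain_le x y (C * d x y).
Proof.
  intros hC hq hcvg. apply chain_le_approx. intros del eps hdel heps.
  pose proof (Rmin_l (del / 2) (eps / (8 * C + 8))) as hr_del.
  pose proof (Rmin_r (del / 2) (eps / (8 * C + 8))) as hr_eps.
  set (r := Rmin (del / 2) (eps / (8 * C + 8))) in *.
  assert (hr : 0 < r) by (apply Rmin_pos; [lra | apply Rdiv_lt_0_compat; lra]).
  assert (hrC : 4 * C * r <= eps / 2).
  { apply Rmult_le_compat_r with (r := 8 * C + 8) in hr_eps; [|lra].
    replace (eps / (8 * C + 8) * (8 * C + 8)) with eps in hr_eps by (field; lra). nra. }
  destruct (hcvg r hr) as [N hN]. destruct (hN N (le_n N)) as [_ hdense].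
  destruct (hdense x I r hr) as (x' & hx' & hxx').
  destruct (hdense y I r hr) as (y' & hy' & hyy').
  exists x', y'. rewrite (dist_sym y' y). repeat split; [lra | lra |].
  apply dchain_weaken with del (C * d x' y' + eps / 2); [lra | |].
  - pose proof (dist_triangle x' x y'). pose proof (dist_triangle x y y').
    rewrite (dist_sym x' x) in *.
    assert (C * d x' y' <= C * (d x y + 4 * r)) by (apply Rmult_le_compat_l; lra). lra.
  - apply (quasiconvex_chain_le (Xk N)); auto; lra.
Qed.

Hypothesis d_cpt : d_compact d.

Lemma d_open_ball p r : d_open d (fun y => d p y < r).
Proof.
  intros x hx. exists (r - d p x). split; [lra|].
  intros y hy. pose proof (dist_triangle p x y). lra.
Qed.

Lemma compact_cluster_point (z : nat -> X) :
  exists p, forall eta, 0 < eta -> forall N, exists n, (N <= n)%nat /\ d (z n) p < eta.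
Proof.
  (* otherwise every point has a ball avoided by a tail of z, and a finite
     subcover misses z M for M beyond all these tails *)
  apply NNPP. intros hnone.
  assert (hfar : forall p, exists eta N, 0 < eta /\ forall n, (N <= n)%nat -> eta <= d (z n) p).
  { intros p. apply NNPP. intros hnear. apply hnone. exists p.
    intros eta heta N. apply NNPP. intros hno. apply hnear. exists eta, N. split; [exact heta|].
    intros n hn. apply Rnot_lt_le. intros hlt. apply hno. exists n. auto. }
  set (U := fun (i : X * R * nat) y => let '(p, eta, N) := i in
     (forall n, (N <= n)%nat -> eta <= d (z n) p) /\ d p y < eta).
  destruct (d_cpt _ U) as [l hl].
  - intros [[p eta] N] y [hN hy].
    destruct (d_open_ball p eta y hy) as (r & hr & hball).
    exists r. split; [exact hr|]. intros y' hy'. split; auto.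
  - intros p. destruct (hfar p) as (eta & N & heta & hN).
    exists (p, eta, N). simpl. rewrite dist_self. auto.
  - set (M := list_max (map snd l)).
    destruct (hl (z M)) as ([[p eta] N] & hin & hN & hp).
    assert (hNM : (N <= M)%nat).
    { pose proof (proj1 (list_max_le (map snd l) M) (le_n M)) as hall.
      rewrite Forall_forall in hall. apply (hall N), (in_map snd _ _ hin). }
    specialize (hN M hNM). rewrite dist_sym in hN. lra.
Qed.

Lemma chain_le_midpoint x y L : chain_le x y L ->
  exists z, chain_le x z (L / 2) /\ chain_le z y (L / 2).
Proof.
  intros hxy.
  assert (happrox : forall n, exists z,
     dchain (1 / 2 ^ n) x z (L / 2 + 2 * (1 / 2 ^ n)) /\
     dchain (1 / 2 ^ n) z y (L / 2 + 2 * (1 / 2 ^ n))).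
  { intros n. assert (he : 0 < 1 / 2 ^ n) by (apply Rdiv_lt_0_compat, pow_lt; lra).
    destruct (dchain_halve _ _ _ _ he (hxy _ _ he he)) as (z & hxz & hzy).
    exists z. split; eapply dchain_weaken; eauto; lra. }
  destruct (choice _ happrox) as [zs hzs].
  destruct (compact_cluster_point zs) as [p hp].
  assert (hclose : forall del eps, 0 < del -> 0 < eps -> exists n,
     d (zs n) p < del /\ 2 * (1 / 2 ^ n) <= eps /\ 1 / 2 ^ n <= del).
  { intros del eps hdel heps.
    destruct (div_pow2_eventually_le 1 (Rmin del (eps / 2))) as [N hN].
    { apply Rmin_pos; lra. }
    destruct (hp del hdel N) as (n & hn & hd).
    pose proof (hN n hn). pose proof (Rmin_l del (eps / 2)). pose proof (Rmin_r del (eps / 2)).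
    exists n. repeat split; lra. }
  exists p. split; apply chain_le_approx; intros del eps hdel heps;
    destruct (hclose del eps hdel heps) as (n & hd & hsmall & hfine);
    destruct (hzs n) as [hxz hzy].
  - exists x, (zs n). rewrite dist_self. repeat split; [lra | exact hd |].
    eapply dchain_weaken; [exact hfine | | exact hxz]. lra.
  - exists (zs n), y. rewrite dist_self, dist_sym. repeat split; [exact hd | lra |].
    eapply dchain_weaken; [exact hfine | | exact hzy]. lra.
Qed.

Definition lipschitz01 (g : R -> X) (L : R) : Prop :=
  forall s t, 0 <= s <= 1 -> 0 <= t <= 1 -> d (g s) (g t) <= L * Rabs (s - t).

Lemma lipschitz01_curve_in g L : 0 <= L -> lipschitz01 g L -> curve_in d (fun _ => True) g.
Proof.
  intros hL hg. split; [intros; exact I|].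
  intros t ht eps heps. exists (eps / (L + 1)). split; [apply Rdiv_lt_0_compat; lra|].
  intros s hs hst. apply Rle_lt_trans with (L * Rabs (s - t)); [apply hg; assumption|].
  apply Rmult_lt_compat_r with (r := L + 1) in hst; [|lra].
  replace (eps / (L + 1) * (L + 1)) with eps in hst by (field; lra).
  pose proof (Rabs_pos (s - t)). nra.
Qed.

Lemma lipschitz01_length_le g L : lipschitz01 g L -> length_le d g L.
Proof.
  intros hg t n (h0 & hn & hmono).
  assert (hrange : forall i, (i <= n)%nat -> 0 <= t i <= 1).
  { intros i hi. rewrite <- h0, <- hn.
    split; apply (nondecreasing_upto t n hmono); lia. }
  assert (hsum : forall m, (m <= n)%nat -> psum d g t m <= L * (t m - t O)).
  { induction m as [|m IH]; intros hm; simpl; [lra|].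
    specialize (IH ltac:(lia)). specialize (hmono m ltac:(lia)).
    pose proof (hg (t m) (t (S m)) (hrange m ltac:(lia)) (hrange (S m) hm)) as hstep.
    rewrite Rabs_left1 in hstep by lra. lra. }
  specialize (hsum n (le_n n)). rewrite h0, hn in hsum. lra.
Qed.

Definition dyadic_lipschitz (p : nat -> nat -> X) (L : R) : Prop :=
  forall n m a b, (a <= 2 ^ n)%nat -> (b <= 2 ^ m)%nat ->
    d (p n a) (p m b) <= L * Rabs (INR a / 2 ^ n - INR b / 2 ^ m).

Section DyadicExtension.

Variables (p : nat -> nat -> X) (L : R).
Hypothesis p_lip : dyadic_lipschitz p L.

Lemma dyadic_lipschitz_const_ge0 : 0 <= L.
Proof.
  pose proof (p_lip O O O 1%nat (Nat.le_0_l _) (le_n _)) as h.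
  pose proof (dist_ge0 (p O O) (p O 1%nat)). simpl in h.
  replace (Rabs (0 / 1 - 1 / 1)) with 1 in h by (rewrite Rabs_left; lra). lra.
Qed.

Lemma dyadic_lipschitz_limit t : 0 <= t <= 1 ->
  exists z, forall n i, (i <= 2 ^ n)%nat -> d z (p n i) <= L * Rabs (t - INR i / 2 ^ n).
Proof.
  intros ht. pose proof dyadic_lipschitz_const_ge0 as hL.
  destruct (choice _ (fun n => dyadic_approx t n ht)) as [k hk].
  destruct (compact_cluster_point (fun n => p n (k n))) as [z hz].
  exists z. intros n i hi. apply Rle_plus_epsilon. intros eta heta.
  destruct (div_pow2_eventually_le L (eta / 2)) as [N hN]; [lra|].
  destruct (hz (eta / 2) ltac:(lra) N) as (m & hm & hzm).
  destruct (hk m) as [hkm hkt].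
  pose proof (p_lip m n (k m) i hkm hi) as hpp.
  pose proof (dist_triangle z (p m (k m)) (p n i)). rewrite dist_sym in hzm.
  pose proof (Rabs_triang (INR (k m) / 2 ^ m - t) (t - INR i / 2 ^ n)) as htri.
  rewrite Rabs_minus_sym in htri.
  replace (INR (k m) / 2 ^ m - t + (t - INR i / 2 ^ n))
    with (INR (k m) / 2 ^ m - INR i / 2 ^ n) in htri by ring.
  apply Rmult_le_compat_l with (r := L) in htri, hkt; try exact hL.
  rewrite Rmult_plus_distr_l in htri.
  replace (L * (1 / 2 ^ m)) with (L / 2 ^ m) in hkt by (field; apply pow_nonzero; lra).
  pose proof (hN m hm). lra.
Qed.

Lemma dyadic_lipschitz_extension : exists g, lipschitz01 g L /\ g 0 = p O O /\ g 1 = p O 1%nat.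
Proof.
  pose proof dyadic_lipschitz_const_ge0 as hL.
  set (g := fun t => epsilon (inhabits (p O O)) (fun z =>
    forall n i, (i <= 2 ^ n)%nat -> d z (p n i) <= L * Rabs (t - INR i / 2 ^ n))).
  assert (hg : forall t, 0 <= t <= 1 -> forall n i, (i <= 2 ^ n)%nat ->
    d (g t) (p n i) <= L * Rabs (t - INR i / 2 ^ n)).
  { intros t ht. exact (epsilon_spec _ _ (dyadic_lipschitz_limit t ht)). }
  exists g. split; [|split].
  - intros s t hs ht. apply Rle_plus_epsilon. intros eta heta.
    destruct (div_pow2_eventually_le L (eta / 2)) as [N hN]; [lra|].
    destruct (dyadic_approx s N hs) as (k & hk & hks).
    pose proof (hg s hs N k hk) as hsk. pose proof (hg t ht N k hk) as htk.
    pose proof (dist_triangle (g s) (p N k) (g t)). rewrite dist_sym in htk.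
    pose proof (Rabs_triang (t - s) (s - INR k / 2 ^ N)) as htri.
    rewrite (Rabs_minus_sym t s) in htri.
    replace (t - s + (s - INR k / 2 ^ N)) with (t - INR k / 2 ^ N) in htri by ring.
    apply Rmult_le_compat_l with (r := L) in htri, hks; try exact hL.
    rewrite Rmult_plus_distr_l in htri.
    replace (L * (1 / 2 ^ N)) with (L / 2 ^ N) in hks by (field; apply pow_nonzero; lra).
    pose proof (hN N (le_n N)). lra.
  - apply dist_le0_eq. pose proof (hg 0 ltac:(lra) O O (Nat.le_0_l _)) as h0. simpl in h0.
    replace (0 - 0 / 1) with 0 in h0 by field. rewrite Rabs_R0, Rmult_0_r in h0. exact h0.
  - apply dist_le0_eq. pose proof (hg 1 ltac:(lra) O 1%nat (le_n _)) as h1. simpl in h1.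
    replace (1 - 1 / 1) with 0 in h1 by field. rewrite Rabs_R0, Rmult_0_r in h1. exact h1.
Qed.

End DyadicExtension.

Section Bisection.

Variables (mid : X -> X -> R -> X) (x y : X) (L : R).

(* [bisect n k] is the point at parameter k / 2^n; odd positions at level n + 1
   are midpoints of their neighbours at level n. *)
Fixpoint bisect (n k : nat) : X :=
  match n with
  | O => match k with O => x | S _ => y end
  | S n' => if Nat.odd k
            then mid (bisect n' (Nat.div2 k)) (bisect n' (S (Nat.div2 k))) (L / 2 ^ n')
            else bisect n' (Nat.div2 k)
  end.

Lemma bisect_double n j : bisect (S n) (2 * j) = bisect n j.
Proof. cbn [bisect]. rewrite Nat.odd_even, Nat.div2_double. reflexivity. Qed.

Lemma bisect_double_succ n j :
  bisect (S n) (S (2 * j)) = mid (bisect n j) (bisect n (S j)) (L / 2 ^ n).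
Proof.
  cbn [bisect]. rewrite Nat.div2_succ_double.
  replace (Nat.odd (S (2 * j))) with true; [reflexivity|].
  rewrite <- Nat.add_1_r, Nat.odd_odd. reflexivity.
Qed.

Lemma bisect_mul_pow2 n m a : bisect (n + m) (a * 2 ^ m) = bisect n a.
Proof.
  induction m as [|m IH].
  - rewrite Nat.add_0_r, Nat.mul_1_r. reflexivity.
  - rewrite Nat.add_succ_r, Nat.pow_succ_r', Nat.mul_comm, <- Nat.mul_assoc, bisect_double.
    rewrite Nat.mul_comm. exact IH.
Qed.

Hypothesis mid_spec : forall a b L', chain_le a b L' ->
  chain_le a (mid a b L') (L' / 2) /\ chain_le (mid a b L') b (L' / 2).
Hypothesis xy_chain : chain_le x y L.

Lemma bisect_succ_chain_le n k : (k < 2 ^ n)%nat ->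
  chain_le (bisect n k) (bisect n (S k)) (L / 2 ^ n).
Proof.
  revert k. induction n as [|n IH]; intros k hk.
  - simpl in hk. replace k with O by lia. simpl. replace (L / 1) with L by field. exact xy_chain.
  - replace (L / 2 ^ S n) with (L / 2 ^ n / 2) by (simpl; field; apply pow_nonzero; lra).
    rewrite Nat.pow_succ_r' in hk.
    destruct (Nat.Even_or_Odd k) as [[j ->] | [j ->]].
    + rewrite bisect_double, bisect_double_succ. apply mid_spec, IH. lia.
    + replace (S (2 * j + 1)) with (2 * S j)%nat by lia. rewrite Nat.add_1_r.
      rewrite bisect_double, bisect_double_succ. apply mid_spec, IH. lia.
Qed.

Lemma bisect_chain_le n i j : (i <= j <= 2 ^ n)%nat ->
  chain_le (bisect n i) (bisect n j) ((INR j - INR i) * (L / 2 ^ n)).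
Proof.
  induction j as [|j IH]; intros hij.
  - replace i with O by lia. eapply chain_le_weaken; [|apply chain_le_refl]. simpl. lra.
  - destruct (Nat.eq_dec i (S j)) as [-> | hne].
    + eapply chain_le_weaken; [|apply chain_le_refl]. lra.
    + eapply chain_le_weaken; [|apply chain_le_trans with (bisect n j)].
      2: { apply IH. lia. }
      2: { apply bisect_succ_chain_le. lia. }
      rewrite S_INR. lra.
Qed.

Lemma bisect_dist_le n i j : (i <= 2 ^ n)%nat -> (j <= 2 ^ n)%nat ->
  d (bisect n i) (bisect n j) <= L * Rabs (INR i / 2 ^ n - INR j / 2 ^ n).
Proof.
  assert (hp : 0 < 2 ^ n) by (apply pow_lt; lra).
  assert (hdist : forall i j, (i <= j <= 2 ^ n)%nat ->
    d (bisect n i) (bisect n j) <= L * Rabs (INR i / 2 ^ n - INR j / 2 ^ n)).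
  { intros i' j' hij. assert (hij' : INR i' <= INR j') by (apply le_INR; lia).
    rewrite Rabs_left1.
    - replace (L * - (INR i' / 2 ^ n - INR j' / 2 ^ n)) with ((INR j' - INR i') * (L / 2 ^ n))
        by (field; lra).
      apply chain_le_dist_le, bisect_chain_le, hij.
    - apply Rle_minus. unfold Rdiv. apply Rmult_le_compat_r; [apply Rlt_le, Rinv_0_lt_compat|]; lra. }
  intros hi hj. destruct (Nat.le_ge_cases i j).
  - apply hdist. lia.
  - rewrite dist_sym, Rabs_minus_sym. apply hdist. lia.
Qed.

Lemma bisect_dyadic_lipschitz : dyadic_lipschitz bisect L.
Proof.
  intros n m a b ha hb.
  rewrite <- (bisect_mul_pow2 n m a), <- (bisect_mul_pow2 m n b).
  rewrite <- (INR_mul_pow2_div a n m), <- (INR_mul_pow2_div b m n), (Nat.add_comm m n).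
  apply bisect_dist_le; rewrite Nat.pow_add_r.
  - apply Nat.mul_le_mono_r, ha.
  - rewrite Nat.mul_comm. apply Nat.mul_le_mono_l, hb.
Qed.

End Bisection.

Lemma chain_le_lipschitz_curve x y L : chain_le x y L ->
  exists g, lipschitz01 g L /\ g 0 = x /\ g 1 = y.
Proof.
  intros hxy.
  set (mid := fun a b L' => epsilon (inhabits a)
    (fun z => chain_le a z (L' / 2) /\ chain_le z b (L' / 2))).
  assert (mid_spec : forall a b L', chain_le a b L' ->
    chain_le a (mid a b L') (L' / 2) /\ chain_le (mid a b L') b (L' / 2)).
  { intros a b L' h. apply epsilon_spec, chain_le_midpoint, h. }
  exact (dyadic_lipschitz_extension _ _ (bisect_dyadic_lipschitz mid x y L mid_spec hxy)).
Qed.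

End MetricSpace.

Theorem lemma4p6 (X : Type) (d : X -> X -> R) (Xk : nat -> X -> Prop) (C : R) :
  is_metric d -> d_compact d -> 0 < C ->
  (forall k, quasiconvex d (Xk k) C) ->
  hausdorff_cvg d Xk (fun _ => True) ->
  quasiconvex d (fun _ => True) C.
Proof.
  intros hd hcpt hC hq hcvg x y _ _ eps heps.
  assert (hL : 0 <= C * d x y) by (apply Rmult_le_pos; [lra | apply dist_ge0, hd]).
  destruct (chain_le_lipschitz_curve X d hd hcpt x y (C * d x y)) as (g & hg & g0 & g1).
  { apply (hausdorff_chain_le X d hd Xk); [lra | exact hq | exact hcvg]. }
  exists g. split; [|split; [exact g0 | split; [exact g1|]]].
  - exact (lipschitz01_curve_in X d g _ hL hg).
  - intros t n hpart. pose proof (lipschitz01_length_le X d g _ hg t n hpart). lra.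
Qed.
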